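(* Let $k\ge 1$ and $P\subseteq\{0,1\}^k$. If $P\subseteq\operatorname{Ham}_k(\{0,k\})$, then $O_{\operatorname{Maj}}(P)=P$. Otherwise, if $P=\operatorname{Ham}_k(S)$ for some $S\subseteq\{0,\dots,k\}$ with $S\setminus\{0,k\}$ nonempty, then $O_{\operatorname{Maj}}(P)=\operatorname{Ham}_k\big(\{0,\dots,k\}\cap\{2\min S-k+1,\dots,2\max S-1\}\big)$.
   Context: $\operatorname{Ham}_k(S)=\{x\in\{0,1\}^k:|x|\in S\}$ with $|x|$ the Hamming weight. For odd $L$, $\operatorname{Maj}_L(x)=1$ iff $\sum_{i=1}^Lx_i>L/2$. For $f:\{0,1\}^L\to\{0,1\}$ and $P\subseteq\{0,1\}^k$, $O_f(P)=\{x\in\{0,1\}^k:\exists x^{(1)},\dots,x^{(L)}\in P\text{ with }x_i=f(x^{(1)}_i,\dots,x^{(L)}_i)\ \forall i\in[k]\}$. $O_{\operatorname{Maj}}(P)=\bigcup_{L\text{ odd}}O_{\operatorname{Maj}_L}(P)$. *)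

From mathcomp Require Import all_boot all_order all_algebra.
Set Implicit Arguments. Unset Strict Implicit. Unset Printing Implicit Defensive.

Notation cube k := {ffun 'I_k -> bool}.

Definition hweight (k : nat) (x : cube k) : nat := #|[set i | x i]|.

(* Ham_k(S) for S ⊆ {0,...,k}, represented as S : {set 'I_k.+1} *)
Definition Ham (k : nat) (S : {set 'I_k.+1}) : {set cube k} :=
  [set x : cube k | [exists s in S, hweight x == val s]].

(* Maj_L(y) = 1 iff sum_i y_i > L/2, i.e. 2 * sum > L *)
Definition Maj (L : nat) (y : {ffun 'I_L -> bool}) : bool :=
  L < 2 * #|[set j | y j]|.

Definition Ofun (k L : nat) (f : {ffun 'I_L -> bool} -> bool)
  (P : {set cube k}) : {set cube k} :=
  [set x : cube k | [exists xs : {ffun 'I_L -> cube k},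
     [forall j, xs j \in P] && [forall i, x i == f [ffun j => xs j i]]]].

Definition OMaj (k : nat) (P : {set cube k}) (x : cube k) : Prop :=
  exists L : nat, odd L /\ x \in Ofun (@Maj L) P.

Definition minS (k : nat) (S : {set 'I_k.+1}) : nat := \big[minn/k]_(s in S) val s.
Definition maxS (k : nat) (S : {set 'I_k.+1}) : nat := \max_(s in S) val s.

(* {0,...,k} ∩ {2 min S - k + 1, ..., 2 max S - 1}, bounds taken in int *)
Definition window (k : nat) (S : {set 'I_k.+1}) : {set 'I_k.+1} :=
  [set i : 'I_k.+1 |
     ((2 * (minS S)%:Z - k%:Z + 1 <= (val i)%:Z)%R &&
      ((val i)%:Z <= 2 * (maxS S)%:Z - 1)%R)].

Definition ends (k : nat) : {set 'I_k.+1} :=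
  [set i : 'I_k.+1 | (val i == 0) || (val i == k)].

From mathcomp Require Import all_boot all_order all_algebra all_fingroup zify ring.
Set Implicit Arguments. Unset Strict Implicit. Unset Printing Implicit Defensive.

(* Passing from families to multiplicities, x is in O_Maj(P) iff some nonzero
   weighting c of P has x as its strict weighted majority at every
   coordinate.  Double counting the votes then shows that such an x has weight
   below 2 max S, and, applied to complements, above 2 min S - k.
   Conversely, let x have weight w.  The vectors with a ones inside the support
   of x and b ones outside form a class invariant under the permutations that
   fix x, so its uniform weighting gives every coordinate in the support the
   vote fraction a/w and every other coordinate b/(k-w).  If some t in S lies
   strictly between w/2 and (w+k)/2 a single class of weight t works;
   otherwise a mixture of a light and a heavy class of S does, the nonextreme
   element of S being what makes a suitable mixture exist.  When P consists of
   constant vectors only, the majority is constant and agrees with a member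
   of P. *)

Lemma card_nth_set (T : Type) (y0 : T) (s : seq T) (p : pred T) :
  #|[set j : 'I_(size s) | p (nth y0 s j)]| = count p s.
Proof. by rewrite -sum1dep_card -sum1_count (big_nth y0) big_mkord. Qed.

Lemma exists_subset_card (T : finType) (B : {set T}) n :
  n <= #|B| -> exists2 A : {set T}, A \subset B & #|A| = n.
Proof.
rewrite -bin_gt0 -cards_draws => /card_gt0P [A].
by rewrite inE => /andP [AB /eqP nA]; exists A.
Qed.

Section Weights.
Variable k : nat.
Implicit Types (P : {set cube k}) (x y : cube k) (c : cube k -> nat) (i j : 'I_k).

Definition mass c := \sum_(y : cube k) c y.
Definition votes c i := \sum_(y : cube k | y i) c y.

Definition maj_weights P x c := [/\ 0 < mass c, forall y, 0 < c y -> y \in P &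
  forall i, if x i then mass c < 2 * votes c i else 2 * votes c i < mass c].

Lemma sum_votes c (q : pred 'I_k) :
  \sum_(i | q i) votes c i = \sum_(y : cube k) c y * #|[set i | q i && y i]|.
Proof.
rewrite /votes (exchange_big_dep xpredT) //=; apply: eq_bigr => y _.
by rewrite -sum1dep_card big_distrr /= muln1.
Qed.

Lemma weights_support c (p : pred (cube k)) :
  0 < \sum_(y | p y) c y -> exists2 y, p y & 0 < c y.
Proof.
rewrite lt0n sum_nat_eq0 => /forallPn [y].
by rewrite negb_imply -lt0n => /andP [py cy]; exists y.
Qed.

Definition weight_seq c := flatten [seq nseq (c y) y | y <- index_enum (cube k)].

Lemma count_weight_seq c (p : pred (cube k)) :
  count p (weight_seq c) = \sum_(y | p y) c y.
Proof.
rewrite count_flatten sumnE !big_map [RHS]big_mkcond /=.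
by apply: eq_bigr => y _; rewrite count_nseq; case: (p y); rewrite ?mul1n.
Qed.

Lemma mem_weight_seq c y : y \in weight_seq c -> 0 < c y.
Proof. by case/flattenP => _ /mapP [z _ ->]; rewrite mem_nseq => /andP [? /eqP ->]. Qed.

Lemma maj_weights_OMaj P x c : maj_weights P x c -> OMaj P x.
Proof.
case=> /(@weights_support c predT) [y0 _ cy0] suppP majx.
(* Doubling the weights and adding one vector of the support makes the total
   odd without changing any strict majority. *)
pose s := y0 :: weight_seq c ++ weight_seq c.
have count_s (p : pred (cube k)) : count p s = p y0 + 2 * \sum_(y | p y) c y.
  by rewrite /= count_cat count_weight_seq addnn -mul2n.
exists (size s); split; first by rewrite -count_predT count_s /= oddD oddM.
rewrite inE; apply/existsP; exists [ffun j : 'I_(size s) => nth y0 s j].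
apply/andP; split.
  apply/forallP => j; rewrite ffunE; apply: suppP.
  move: (mem_nth y0 (ltn_ord j)); rewrite inE => /predU1P [-> //|].
  by rewrite mem_cat orbb; apply: mem_weight_seq.
apply/forallP => i; rewrite /Maj; set F := [ffun j => _ : bool].
have -> : [set j | F j] = [set j : 'I_(size s) | nth y0 s j i].
  by apply/setP => j; rewrite !inE !ffunE.
rewrite (card_nth_set y0 s (fun y : cube k => y i)) -count_predT !count_s.
have := majx i; rewrite /mass /votes.
by case: (x i); case: (y0 i) => /= h; apply/eqP; lia.
Qed.

Lemma sum_card_fibers L (xs : 'I_L -> cube k) (p : pred (cube k)) :
  \sum_(y | p y) #|[set j | xs j == y]| = #|[set j | p (xs j)]|.
Proof.
rewrite -sum1dep_card (partition_big xs p) //=; apply: eq_bigr => y py.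
by rewrite -sum1dep_card; apply: eq_bigl => j; rewrite andb_idl // => /eqP ->.
Qed.

Lemma OMaj_maj_weights P x : OMaj P x -> exists c, maj_weights P x c.
Proof.
case=> L [oddL]; rewrite inE => /existsP [xs /andP [/forallP xsP /forallP xsx]].
pose c y := #|[set j | xs j == y]|.
have mass_c : mass c = L by rewrite /mass (sum_card_fibers xs predT) cardsT card_ord.
exists c; split.
- by rewrite mass_c; case: L oddL {xs xsP xsx c mass_c}.
- by move=> y /card_gt0P [j]; rewrite inE => /eqP <-.
move=> i; have := xsx i; rewrite /Maj /votes (sum_card_fibers xs (fun y => y i)) mass_c.
have -> : [set j | [ffun j => xs j i] j] = [set j | xs j i].
  by apply/setP => j; rewrite !inE ffunE.
have : L != 2 * #|[set j | xs j i]| by apply: contraTneq oddL => ->; rewrite oddM.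
by move=> Lneq /eqP ->; case: ifP => // /negbT; rewrite -leqNgt ltn_neqAle eq_sym Lneq.
Qed.

Lemma maj_weights_hweight_lt P x c M : maj_weights P x c -> 0 < M ->
  (forall y, y \in P -> hweight y <= M) -> hweight x < 2 * M.
Proof.
case=> _ suppP majx M_gt0 PM.
have sum_hweight : \sum_i votes c i = \sum_(y : cube k) c y * hweight y.
  rewrite (sum_votes c predT); apply: eq_bigr => y _; rewrite /hweight.
  by congr (_ * #|_|); apply/setP => i; rewrite !inE.
have : hweight x * (mass c).+1 <= 2 * (mass c * M).
  rewrite /hweight -sum_nat_cond_const.
  apply: (@leq_trans (\sum_(i | x i) 2 * votes c i)).
    by apply: leq_sum => i xi; have := majx i; rewrite xi.
  rewrite -big_distrr leq_mul2l /=.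
  apply: (@leq_trans (\sum_i votes c i)).
    by rewrite [X in _ <= X](bigID (fun i => x i)) leq_addr.
  rewrite sum_hweight /mass big_distrl /=; apply: leq_sum => y _.
  by have [->|/suppP/PM] := posnP (c y); last exact: leq_mul.
nia.
Qed.

Definition negc x : cube k := [ffun i => ~~ x i].

Lemma negcK : involutive negc.
Proof. by move=> x; apply/ffunP => i; rewrite !ffunE negbK. Qed.

Lemma hweight_le x : hweight x <= k.
Proof. by rewrite -[X in _ <= X]card_ord max_card. Qed.

Lemma hweight_negc x : hweight (negc x) = k - hweight x.
Proof.
rewrite /hweight cardsCs card_ord; congr (_ - _); apply: eq_card => i.
by rewrite !inE ffunE negbK.
Qed.

Lemma maj_weights_negc P x c :
  maj_weights P x c -> maj_weights (negc @^-1: P) (negc x) (c \o negc).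
Proof.
case=> mass_gt0 suppP majx.
have mass_negc : mass (c \o negc) = mass c.
  by rewrite /mass [RHS](reindex_inj (can_inj negcK)).
have votes_negc i : votes (c \o negc) i + votes c i = mass c.
  rewrite /mass (bigID (fun y : cube k => y i)) addnC /votes; congr (_ + _).
  rewrite [RHS](reindex_inj (can_inj negcK)).
  by apply: eq_bigl => y; rewrite /= ffunE negbK.
split; first by rewrite mass_negc.
  by move=> y /suppP; rewrite inE.
move=> i; have := majx i; have := votes_negc i; rewrite mass_negc ffunE.
by case: (x i) => /=; lia.
Qed.

Lemma maj_weights_hweight_gt P x c m : maj_weights P x c -> m < k ->
  (forall y, y \in P -> m <= hweight y) -> 2 * m < hweight x + k.
Proof.
move=> /maj_weights_negc negw m_lt_k Pm.
have negP_le y : y \in negc @^-1: P -> hweight y <= k - m.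
  by rewrite inE => /Pm; rewrite hweight_negc; have := hweight_le y; lia.
have := maj_weights_hweight_lt negw (_ : 0 < k - m) negP_le.
by rewrite hweight_negc subn_gt0; have := hweight_le x; lia.
Qed.

Lemma maj_weights_coord_eq P x c i j : maj_weights P x c ->
  (forall y, y \in P -> y i = y j) -> x i = x j.
Proof.
case=> _ suppP majx Pij.
have votes_ij : votes c i = votes c j.
  rewrite /votes !(big_mkcond (fun y : cube k => y _)); apply: eq_bigr => y _.
  by have [->|/suppP/Pij ->] := posnP (c y); [case: (y i); case: (y j)|].
by have := majx i; have := majx j; rewrite votes_ij; case: (x i); case: (x j); lia.
Qed.

Lemma maj_weights_agree P x c i :
  maj_weights P x c -> exists2 y, y \in P & y i = x i.
Proof.
case=> _ suppP majx; have := majx i.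
rewrite /mass (bigID (fun y : cube k => y i)) -/(votes c i) /=.
case: (x i) => maj.
  have [|y yi /suppP yP] := @weights_support c _ (_ : 0 < votes c i); first lia.
  by exists y.
have [|y /negbTE yi /suppP yP] := @weights_support c (fun y => ~~ y i).
  by move: maj; rewrite mul2n -addnn ltn_add2l => /(leq_ltn_trans (leq0n _)).
by exists y.
Qed.

Lemma mem_OMaj P x : x \in P -> OMaj P x.
Proof.
move=> xP; apply: (maj_weights_OMaj (c := fun y => y == x)); split.
- by rewrite /mass (bigD1 x) //= eqxx.
- by move=> y; rewrite lt0n eqb0 negbK => /eqP ->.
move=> i; rewrite /mass /votes (bigD1 x) //= eqxx big1 => [|y /negbTE -> //].
rewrite big_mkcond (bigD1 x) //= eqxx big1 => [|y /negbTE ->]; last by case: ifP.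
by case: (x i).
Qed.

Lemma hweight0_false x i : hweight x = 0 -> x i = false.
Proof. by move/cards0_eq/setP/(_ i); rewrite !inE. Qed.

Lemma ends_const y i j : y \in Ham (ends k) -> y i = y j.
Proof.
rewrite inE => /existsP [t /andP [+ /eqP wy]].
rewrite inE -wy => /orP [/eqP|/eqP] w0; first by rewrite !hweight0_false.
have wn : hweight (negc y) = 0 by rewrite hweight_negc w0 subnn.
have := hweight0_false i wn; have := hweight0_false j wn.
by rewrite !ffunE => /negbFE -> /negbFE ->.
Qed.

End Weights.

Section Swaps.
Variable k : nat.
Implicit Types (x y : cube k) (c : cube k -> nat) (i j l : 'I_k).

Definition swapc i j y : cube k := [ffun l => y (tperm i j l)].

Lemma swapcK i j : involutive (swapc i j).
Proof. by move=> y; apply/ffunP => l; rewrite !ffunE tpermK. Qed.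

Lemma votes_swapc c i j : (forall y, c (swapc i j y) = c y) -> votes c i = votes c j.
Proof.
move=> c_swap; rewrite /votes (reindex_inj (can_inj (swapcK i j))).
by apply: eq_big => y; rewrite ?ffunE ?tpermL.
Qed.

Lemma sum_votes_sym c (q : pred 'I_k) i :
    (forall j l y, q j -> q l -> c (swapc j l y) = c y) -> q i ->
  #|[set j | q j]| * votes c i = \sum_(j | q j) votes c j.
Proof.
move=> c_swap qi; rewrite -sum_nat_cond_const; apply: eq_bigr => j qj.
by apply: votes_swapc => y; apply: c_swap.
Qed.

Lemma card_swapc (q : pred 'I_k) i j y : q i = q j ->
  #|[set l | q l && swapc i j y l]| = #|[set l | q l && y l]|.
Proof.
move=> qij; rewrite -[RHS](card_preimset _ (@perm_inj _ (tperm i j))).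
by apply: eq_card => l; rewrite !inE ffunE; case: tpermP => [->|->|] //; rewrite qij.
Qed.

End Swaps.

Section Profiles.
Variables (k : nat) (x : cube k).
Implicit Types (P : {set cube k}) (y : cube k).

Definition profile a b := [set y : cube k |
  (#|[set i | x i && y i]| == a) && (#|[set i | negc x i && y i]| == b)].

Lemma profile_card a b y : y \in profile a b ->
  #|[set i | x i && y i]| = a /\ #|[set i | negc x i && y i]| = b.
Proof. by rewrite inE => /andP [/eqP -> /eqP ->]. Qed.

Lemma profile_card_gt0 a b :
  a <= hweight x -> b <= k - hweight x -> 0 < #|profile a b|.
Proof.
rewrite -hweight_negc => /exists_subset_card [A1 A1x <-] /exists_subset_card [A2 A2nx <-].
apply/card_gt0P; exists [ffun i => i \in A1 :|: A2]; rewrite inE.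
have A1x' i : i \in A1 -> x i by move/(subsetP A1x); rewrite inE.
have A2nx' i : i \in A2 -> x i = false.
  by move/(subsetP A2nx); rewrite inE ffunE => /negbTE.
have -> : [set i | x i && [ffun i => i \in A1 :|: A2] i] = A1.
  apply/setP => i; rewrite !inE ffunE in_setU.
  case/boolP: (i \in A1) => [/A1x' ->|_] //=.
  by case/boolP: (i \in A2) => [/A2nx' ->|_]; rewrite ?andbF.
have -> : [set i | negc x i && [ffun i => i \in A1 :|: A2] i] = A2.
  apply/setP => i; rewrite !inE !ffunE in_setU.
  case/boolP: (i \in A2) => [/A2nx' ->|_]; rewrite ?orbT //=.
  by case/boolP: (i \in A1) => [/A1x' ->|_]; rewrite ?andbF.
by rewrite !eqxx.
Qed.

Lemma hweight_profile a b y : y \in profile a b -> hweight y = a + b.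
Proof.
case/profile_card => <- <-; rewrite /hweight -(cardsID [set i | x i]).
by congr (_ + _); apply: eq_card => i; rewrite !inE ?ffunE andbC.
Qed.

Lemma profile_sub_Ham (S : {set 'I_k.+1}) (t : 'I_k.+1) a b :
  t \in S -> val t = a + b -> profile a b \subset Ham S.
Proof.
move=> tS tab; apply/subsetP => y /hweight_profile wy.
by rewrite inE; apply/existsP; exists t; rewrite tS wy tab /=.
Qed.

Lemma profile_swapc a b i j y : x i = x j ->
  (swapc i j y \in profile a b) = (y \in profile a b).
Proof. by move=> xij; rewrite !inE !card_swapc // !ffunE xij. Qed.

Variables (a1 b1 a2 b2 r1 r2 : nat).
Let C1 := profile a1 b1.
Let C2 := profile a2 b2.
Let D := #|C1| * #|C2|.

(* Class weights cross-multiplied by the class sizes, so that the classes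
   contribute in the ratio r1 : r2. *)
Definition profile_mix y := r1 * #|C2| * (y \in C1) + r2 * #|C1| * (y \in C2).

Lemma sum_profile_mix (F : cube k -> nat) n1 n2 :
  {in C1, F =1 fun=> n1} -> {in C2, F =1 fun=> n2} ->
  \sum_y profile_mix y * F y = (r1 * n1 + r2 * n2) * D.
Proof.
have sum_class (C : {set cube k}) n :
    {in C, F =1 fun=> n} -> \sum_y (y \in C) * F y = #|C| * n.
  move=> Cn; rewrite -sum_nat_const [RHS]big_mkcond; apply: eq_bigr => y _.
  by case: (boolP (y \in C)) => [/Cn ->|_]; rewrite ?mul1n.
move=> C1n C2n; under eq_bigr => y _ do rewrite mulnDl -!mulnA.
by rewrite big_split -!big_distrr /= (sum_class _ n1) // (sum_class _ n2) // /D; ring.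
Qed.

Lemma mass_profile_mix : mass profile_mix = (r1 + r2) * D.
Proof.
have := @sum_profile_mix (fun=> 1) 1 1 (fun _ _ => erefl) (fun _ _ => erefl).
by rewrite !muln1 => <-; apply: eq_bigr => y _; rewrite muln1.
Qed.

Lemma votes_profile_mix (q : pred 'I_k) n1 n2 i :
    (forall j l, q j -> q l -> x j = x l) -> q i ->
    {in C1, forall y, #|[set j | q j && y j]| = n1} ->
    {in C2, forall y, #|[set j | q j && y j]| = n2} ->
  #|[set j | q j]| * votes profile_mix i = (r1 * n1 + r2 * n2) * D.
Proof.
move=> qx qi C1n C2n; rewrite sum_votes_sym // => [|j l y qj ql].
  by rewrite sum_votes; apply: sum_profile_mix.
by rewrite /profile_mix !profile_swapc //; apply: qx.
Qed.

Lemma profile_mix_OMaj P : let w := hweight x in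
  C1 \subset P -> C2 \subset P -> 0 < #|C1| -> 0 < #|C2| -> 0 < r1 + r2 ->
  (0 < w -> w * (r1 + r2) < 2 * (r1 * a1 + r2 * a2)) ->
  (w < k -> 2 * (r1 * b1 + r2 * b2) < (k - w) * (r1 + r2)) ->
  OMaj P x.
Proof.
move=> w sub1 sub2 p1_gt0 p2_gt0 r_gt0 majA majB.
have D_gt0 : 0 < D by rewrite muln_gt0 p1_gt0 p2_gt0.
apply: (maj_weights_OMaj (c := profile_mix)); split.
- by rewrite mass_profile_mix muln_gt0 r_gt0.
- move=> y; rewrite /profile_mix.
  case/boolP: (y \in C1) => [/(subsetP sub1) //|_].
  case/boolP: (y \in C2) => [/(subsetP sub2) //|_].
  by rewrite !muln0.
move=> i; rewrite mass_profile_mix; case xi: (x i).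
  have w_gt0 : 0 < w by apply/card_gt0P; exists i; rewrite inE.
  have : w * votes profile_mix i = (r1 * a1 + r2 * a2) * D.
    apply: (votes_profile_mix (q := fun j => x j)) => //.
    - by move=> j l -> ->.
    - by move=> y /profile_card [].
    - by move=> y /profile_card [].
  have := majA w_gt0; nia.
have w_lt_k : w < k.
  by rewrite -subn_gt0 -hweight_negc; apply/card_gt0P; exists i; rewrite !inE ffunE xi.
have : (k - w) * votes profile_mix i = (r1 * b1 + r2 * b2) * D.
  rewrite -hweight_negc; apply: (votes_profile_mix (q := fun j => negc x j)).
  - by move=> j l; rewrite !ffunE => /negbTE -> /negbTE ->.
  - by rewrite ffunE xi.
  - by move=> y /profile_card [].
  - by move=> y /profile_card [].
have := majB w_lt_k; nia.
Qed.

End Profiles.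

Section Window.
Variables (k : nat) (S : {set 'I_k.+1}) (x : cube k).
Let w := hweight x.

Lemma one_profile_OMaj (t : 'I_k.+1) : t \in S ->
  (0 < w -> w < 2 * t) -> (w < k -> 2 * t < w + k) -> OMaj (Ham S) x.
Proof.
move=> tS lo hi; have t_le_k := ltn_ord t; have w_le_k : w <= k := hweight_le x.
set a := minn t w; set b := t - a.
have sub : profile x a b \subset Ham S.
  by apply: (profile_sub_Ham x tS); rewrite /b subnKC // geq_minl.
have pos : 0 < #|profile x a b| by apply: profile_card_gt0; rewrite -/w /b /a; lia.
apply: (profile_mix_OMaj (r1 := 1) (r2 := 0) sub sub pos pos) => //=.
  by rewrite /b /a; lia.
by rewrite /b /a; lia.
Qed.

Lemma two_profiles_OMaj (t1 t2 : 'I_k.+1) : t1 \in S -> t2 \in S ->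
  0 < w -> w < k -> 2 * t1 <= w -> w + k <= 2 * t2 -> (0 < t1) || (t2 < k) ->
  OMaj (Ham S) x.
Proof.
move=> t1S t2S w_gt0 w_lt_k t1w t2w t12; have t2_le_k := ltn_ord t2.
set D1 := w - 2 * t1; set D2 := 2 * t2 - (w + k).
have eD1 : D1 + 2 * t1 = w by rewrite subnK.
have eD2 : D2 + (w + k) = 2 * t2 by rewrite subnK.
have key : D1 * D2 < w * (k - w).
  case/orP: t12 => t12.
    apply: (@leq_ltn_trans (D1 * (k - w))); first by rewrite leq_mul2l; lia.
    by rewrite ltn_pmul2r; lia.
  apply: (@leq_ltn_trans (w * D2)); first by rewrite leq_mul2r; lia.
  by rewrite ltn_pmul2l; lia.
have sub1 : profile x t1 0 \subset Ham S by apply: (profile_sub_Ham x t1S); rewrite addn0.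
have sub2 : profile x w (t2 - w) \subset Ham S.
  by apply: (profile_sub_Ham x t2S); rewrite subnKC //; lia.
(* The two conditions of profile_mix_OMaj say D1 / w < r2 / r1 < (k - w) / D2;
   the mediant of these bounds lies strictly between them by key. *)
apply: (profile_mix_OMaj (r1 := w + D2) (r2 := D1 + (k - w)) sub1 sub2) => //.
- by apply: profile_card_gt0; lia.
- by apply: profile_card_gt0; rewrite -/w; lia.
- lia.
- by move=> _; nia.
by move=> _; nia.
Qed.

Lemma window_OMaj (s m M : 'I_k.+1) : s \in S -> m \in S -> M \in S ->
  0 < s < k -> 2 * m < w + k -> w < 2 * M -> OMaj (Ham S) x.
Proof.
move=> sS mS MS /andP [s_gt0 s_lt_k] mw wM.
case: (pickP [pred t : 'I_k.+1 | [&& t \in S, (0 < w) ==> (w < 2 * t)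
                                  & (w < k) ==> (2 * t < w + k)]]).
  by move=> t /and3P [tS /implyP lo /implyP hi]; apply: (one_profile_OMaj tS).
move=> none.
have far t : t \in S -> (0 < w) && (2 * t <= w) || (w < k) && (w + k <= 2 * t).
  by move=> tS; have := none t; rewrite /= tS /=; lia.
have := far m mS; have := far M MS; have := far s sS => fs fM fm.
have [w_gt0 w_lt_k] : 0 < w /\ w < k by lia.
have [sw|sw] := leqP (2 * s) w.
  by apply: (two_profiles_OMaj sS MS) => //; [lia | rewrite s_gt0].
by apply: (two_profiles_OMaj mS sS) => //; [lia | lia | rewrite s_lt_k orbT].
Qed.

End Window.

Section Extremes.
Variables (k : nat) (S : {set 'I_k.+1}).

Lemma minS_le (s : 'I_k.+1) : s \in S -> minS S <= s.
Proof. exact: (@Order.TotalTheory.bigmin_le_cond _ nat _ k s (mem S) val). Qed.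

Lemma maxS_ge (s : 'I_k.+1) : s \in S -> s <= maxS S.
Proof. by move=> sS; rewrite /maxS (bigD1 s) //= leq_maxl. Qed.

Lemma minS_mem (s : 'I_k.+1) : s \in S ->
  exists2 m : 'I_k.+1, m \in S & val m = minS S.
Proof.
move=> sS; have [m mS e] :=
  @Order.TotalTheory.eq_bigmin _ nat _ k s (mem S) val sS (fun m _ => ltn_ord m).
by exists m => //; apply: esym e.
Qed.

Lemma maxS_mem (s : 'I_k.+1) : s \in S ->
  exists2 M : 'I_k.+1, M \in S & val M = maxS S.
Proof.
move=> sS; have [|M MS e] := eq_bigmax_cond (fun s : 'I_k.+1 => val s) (_ : 0 < #|S|).
  by apply/card_gt0P; exists s.
by exists M => //; apply: esym e.
Qed.

Lemma mem_Ham_window (x : cube k) :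
  (x \in Ham (window S)) = (2 * minS S < hweight x + k) && (hweight x < 2 * maxS S).
Proof.
rewrite inE; apply/existsP/andP => [[t /andP [+ /eqP wt]] | [lo hi]].
  by rewrite inE -wt => /andP [lo hi]; split; lia.
exists (inord (hweight x)); rewrite inE /= inordK ?ltnS ?hweight_le // eqxx andbT.
by apply/andP; split; lia.
Qed.

End Extremes.

Theorem claim4p7 (k : nat) (hk : 0 < k) (P : {set {ffun 'I_k -> bool}}) :
  (P \subset Ham (ends k) -> forall x, OMaj P x <-> x \in P) /\
  (~~ (P \subset Ham (ends k)) ->
   forall S : {set 'I_k.+1}, P = Ham S ->
   (exists s, s \in S :\: ends k) ->
   forall x, OMaj P x <-> x \in Ham (window S)).
Proof.
split=> [P_ends x | _ S -> [s /setDP [sS s_ends]] x].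
  split=> [/OMaj_maj_weights [c cw] | /mem_OMaj //].
  have P_const y i j : y \in P -> y i = y j by move/(subsetP P_ends)/ends_const.
  pose i0 : 'I_k := Ordinal hk.
  have [y yP yx] := maj_weights_agree i0 cw.
  suff -> : x = y by [].
  apply/ffunP => i; rewrite (maj_weights_coord_eq cw (fun y => P_const y i i0)) -yx.
  exact: P_const.
have s_mid : 0 < s < k by move: s_ends (ltn_ord s); rewrite inE /=; lia.
have m_lt_k : minS S < k by have := minS_le sS; lia.
have M_gt0 : 0 < maxS S by have := maxS_ge sS; lia.
have [m mS em] := minS_mem sS; have [M MS eM] := maxS_mem sS.
have HamS y : y \in Ham S -> minS S <= hweight y <= maxS S.
  by rewrite inE => /existsP [t /andP [tS /eqP ->]]; rewrite minS_le ?maxS_ge.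
rewrite mem_Ham_window; split=> [/OMaj_maj_weights [c cw] | /andP [lo hi]].
  apply/andP; split.
    by apply: (maj_weights_hweight_gt cw m_lt_k) => y /HamS /andP [].
  by apply: (maj_weights_hweight_lt cw M_gt0) => y /HamS /andP [].
by apply: (window_OMaj sS mS MS); rewrite ?em ?eM.
Qed.
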